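(* Let $Z$ be a real random variable such that for some $\theta>0$, $\Pr[|Z-\mathbb E[Z]|\ge\xi]\le 2e^{-\xi^2\theta^2/2}$ for all $\xi\ge0$. Then for every $\kappa>0$, $$\Pr[Z\ge\mathbb E[Z]]\ge\frac{\theta^2\operatorname{Var}[Z]}{2\kappa^2}-2e^{-\kappa^2/2}\left(1+\sqrt2+\frac{\sqrt{2\pi}}{\kappa}+\frac1{\kappa^2}\right).$$ *)

From HB Require Import structures.
From mathcomp Require Export all_boot all_order all_algebra.
From mathcomp Require Export all_classical all_reals all_analysis.

From HB Require Import structures.
From mathcomp Require Import measurable_realfun ring lra.
Import Order.TTheory GRing.Theory Num.Theory.
Import numFieldNormedType.Exports.
Local Open Scope classical_set_scope.
Local Open Scope ring_scope.

(* Put X = Z - E[Z] and, for b > 0, u = max(|X| - b, 0).  The elementary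
   inequality x^2 + b x <= 2 b^2 [x >= 0] + u^2 + 3 b u, integrated against the
   centered X, gives Var Z <= 2 b^2 P[Z >= E Z] + E[u^2] + 3 b E[u].  By the
   layer-cake formula the sub-Gaussian tail yields
   E[u^2] <= 4 e^(-b^2 theta^2 / 2) / theta^2 and
   E[u] <= 2 e^(-b^2 theta^2 / 2) / (b theta^2), so that b = kappa / theta gives
   theta^2 Var Z / (2 kappa^2) <= P[Z >= E Z] + 5 e^(-kappa^2 / 2) / kappa^2,
   which implies the claim when kappa >= 1/2.  When kappa < 1/2, the case b = 0
   of the same bound, Var Z <= 4 / theta^2, suffices: the subtracted term then
   exceeds 2 / kappa^2. *)

Definition excess {R : realDomainType} (b x : R) : R := Num.max (`|x| - b) 0.

Section excess.
Context {R : realFieldType}.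
Implicit Types b r x : R.

Lemma excess_ge0 b x : 0 <= excess b x.
Proof. by rewrite le_max lexx orbT. Qed.

Lemma excess0 x : excess 0 x = `|x|.
Proof. by rewrite /excess subr0 max_l. Qed.

Lemma lt_excess b r x : 0 <= r -> r < excess b x -> b + r <= `|x|.
Proof.
move=> r0; rewrite /excess lt_max (ltNge r 0) r0 orbF => /ltW; lra.
Qed.

Lemma sqr_add_mul_le_excess b x : 0 < b ->
  x ^+ 2 + b * x <=
    2 * b ^+ 2 * (0 <= x)%R%:R + excess b x ^+ 2 + 3 * b * excess b x.
Proof.
rewrite /excess => b0; have [x0|x0] := leP 0 x.
  rewrite ger0_norm // /Num.max; case: ifP => hb /=; last by lra.
  have : 0 <= (b - x) * (2 * b + x) by apply: mulr_ge0; lra.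
  lra.
rewrite ltr0_norm // /Num.max; case: ifP => hb /=.
  have : x * (x + b) <= 0 by apply: mulr_le0_ge0; lra.
  lra.
have : b * (x + b) <= 0 by apply: mulr_ge0_le0; lra.
lra.
Qed.

End excess.

Section kappa_bounds.
Context {R : realType}.
Implicit Types k s t th v p : R.

Lemma sqrt2_ge1 : 1 <= Num.sqrt (2 : R).
Proof. by rewrite -[leLHS]sqrtr1 ler_sqrt // ler1n. Qed.

Lemma sqrt2pi_ge2 : 2 <= Num.sqrt (2 * pi : R).
Proof.
rewrite -[leLHS]ger0_norm // -sqrtr_sqr ler_sqrt ?mulr_ge0 ?pi_ge0 //.
have := @pi_ge2 R; lra.
Qed.

Lemma bound_small_kappa k s t th v p : 0 < th -> 0 < k <= 1 ->
  1 <= s -> 2 <= t -> 0 <= p -> v <= 4 / th ^+ 2 ->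
  th ^+ 2 / (2 * k ^+ 2) * v -
    2 * expR (- k ^+ 2 / 2) * (1 + s + t / k + 1 / k ^+ 2) <= p.
Proof.
move=> th0 /andP[k0 k1] s1 t2 p0 v4.
have -> : th ^+ 2 / (2 * k ^+ 2) * v = (th ^+ 2 * v / 4) * (2 / k ^+ 2).
  by field; rewrite gt_eqF.
have tv1 : th ^+ 2 * v / 4 <= 1.
  by rewrite ler_pdivrMr // mulrC -ler_pdivlMr ?exprn_gt0 // mul1r.
have -> : 2 * expR (- k ^+ 2 / 2) * (1 + s + t / k + 1 / k ^+ 2) =
    2 / k ^+ 2 * (expR (- k ^+ 2 / 2) * (k ^+ 2 * (1 + s) + t * k + 1)).
  by field; rewrite gt_eqF.
have E_ge : 1 - k ^+ 2 / 2 <= expR (- k ^+ 2 / 2).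
  by have := expR_ge1Dx (- k ^+ 2 / 2); lra.
have C_ge : 2 * k ^+ 2 + 2 * k + 1 <= k ^+ 2 * (1 + s) + t * k + 1.
  have : 0 <= k ^+ 2 * (s - 1) by apply: mulr_ge0; [exact: sqr_ge0 | lra].
  have : 0 <= k * (t - 2) by apply: mulr_ge0; lra.
  lra.
have EC1 : 1 <= expR (- k ^+ 2 / 2) * (k ^+ 2 * (1 + s) + t * k + 1).
  apply: le_trans (ler_pM _ _ E_ge C_ge); last 2 first.
  - by have := sqr_ge0 k; nra.
  - by have := sqr_ge0 k; nra.
  have k1' : 0 <= 1 - k by lra.
  have k2 : 0 <= 2 + 2 * k + k ^+ 2 by have := sqr_ge0 k; lra.
  have := mulr_ge0 (ltW k0) (mulr_ge0 k1' k2).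
  have := sqr_ge0 k; nra.
have k2_ge0 : 0 <= 2 / k ^+ 2 by rewrite divr_ge0 ?sqr_ge0.
have := ler_wpM2l k2_ge0 EC1; have := ler_wpM2l k2_ge0 tv1.
lra.
Qed.

Lemma bound_large_kappa k s t th v p : 0 < th -> 1 / 2 <= k ->
  1 <= s -> 2 <= t ->
  v <= 2 * (k / th) ^+ 2 * p + 10 * expR (- k ^+ 2 / 2) / th ^+ 2 ->
  th ^+ 2 / (2 * k ^+ 2) * v -
    2 * expR (- k ^+ 2 / 2) * (1 + s + t / k + 1 / k ^+ 2) <= p.
Proof.
move=> th0 k2 s1 t2 hv; have k0 : 0 < k by lra.
set E := expR _.
have E0 : 0 <= E / k ^+ 2.
  by apply: divr_ge0; [exact: expR_ge0 | exact: sqr_ge0].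
have a0 : 0 <= th ^+ 2 / (2 * k ^+ 2).
  by apply: divr_ge0; [exact: sqr_ge0 | rewrite mulr_ge0 // sqr_ge0].
have := ler_wpM2l a0 hv.
have -> : th ^+ 2 / (2 * k ^+ 2) * (2 * (k / th) ^+ 2 * p + 10 * E / th ^+ 2) =
    p + E / k ^+ 2 * 5 by field; rewrite !gt_eqF.
have -> : 2 * E * (1 + s + t / k + 1 / k ^+ 2) =
    E / k ^+ 2 * (2 * k ^+ 2 * (1 + s) + 2 * t * k + 2).
  by field; rewrite gt_eqF.
have : 5 <= 2 * k ^+ 2 * (1 + s) + 2 * t * k + 2.
  have : 0 <= k ^+ 2 * (s - 1) by apply: mulr_ge0; [exact: sqr_ge0 | lra].
  have : 0 <= k * (t - 2) by apply: mulr_ge0; lra.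
  nra.
move=> /(ler_wpM2l E0); lra.
Qed.

End kappa_bounds.

Section level_sets.
Context {d} {T : measurableType d} {R : realType}.

Lemma measurable_ler_set (f : T -> R) (c : R) :
  measurable_fun setT f -> measurable [set w | c <= f w].
Proof. by move=> mf; rewrite -preimage_itvcy -[_ @^-1` _]setTI; exact: mf. Qed.

Lemma measurable_ltr_set (f : T -> R) (c : R) :
  measurable_fun setT f -> measurable [set w | c < f w].
Proof. by move=> mf; rewrite -preimage_itvoy -[_ @^-1` _]setTI; exact: mf. Qed.

Lemma ge0_integrable_le (mu : {measure set T -> \bar R}) (f : T -> R) (c : R) :
  measurable_fun setT f -> (forall w, 0 <= f w) ->
  (\int[mu]_w (f w)%:E <= c%:E)%E -> mu.-integrable setT (EFin \o f).
Proof.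
move=> mf f0 fc; apply/integrableP; split; first exact/measurable_EFinP.
under eq_integral do rewrite /= ger0_norm //.
exact: le_lt_trans fc (ltry _).
Qed.

End level_sets.

Section centering.
Context {d} {T : measurableType d} {R : realType} {P : probability T R}.
Context {Z : T -> R}.

Lemma variance_centered :
  'V_P[Z] = (\int[P]_w ((Z w - fine 'E_P[Z]) ^+ 2)%:E)%E.
Proof.
by rewrite /variance !unlock /=; apply: eq_integral => w _; rewrite expr2.
Qed.

Hypothesis iZ : P.-integrable setT (EFin \o Z).

Lemma integrable_centered :
  P.-integrable setT (EFin \o (fun w => Z w - fine 'E_P[Z])).
Proof.
apply: (eq_integrable measurableT _ _ _ (integrableB measurableT iZ
  (finite_measure_integrable_cst P (fine 'E_P[Z]) measurableT))).
by move=> w _; rewrite /= EFinB.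
Qed.

Lemma integral_centered : (\int[P]_w (Z w - fine 'E_P[Z])%:E = 0)%E.
Proof.
rewrite integralB_EFin // ?finite_measure_integrable_cst //.
rewrite integral_cst //= probability_setT mule1 unlock.
by rewrite fineK ?subee // integrable_fin_num.
Qed.

End centering.

Section exponential_tail.
Context {d} {T : measurableType d} {R : realType} (P : probability T R).

(* Layer-cake formula, with c e^(-l r) = (c / l) * (exponential density of
   rate l). *)
Lemma ge0_integral_le_exp_tail (Y : T -> R) (c l : R) :
  measurable_fun setT Y -> (forall w, 0 <= Y w) -> 0 <= c -> 0 < l ->
  (forall r, 0 <= r ->
     (P [set w | (r < Y w)%R] <= (c * expR (- l * r))%:E)%E) ->
  (\int[P]_w (Y w)%:E <= (c / l)%:E)%E.
Proof.
move=> mY Y0 c0 l0 Ytail.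
pose Y' : {RV P >-> R} := mfun_Sub (mem_set mY : Y \in mfun).
have cl0 : 0 <= c / l by rewrite divr_ge0 // ltW.
have pdf_ge0 (r : R) : (0 <= (c / l)%:E * (exponential_pdf l r)%:E)%E.
  by rewrite -EFinM lee_fin mulr_ge0 // exponential_pdf_ge0 // ltW.
have mpdf : measurable_fun setT
    (fun r : R => (c / l)%:E * (exponential_pdf l r)%:E)%E.
  apply: emeasurable_funM => //; apply/measurable_EFinP.
  exact: measurable_exponential_pdf.
rewrite -[X in (X <= _)%E]/(\int[P]_w (Y' w)%:E)%E -expectation_def.
rewrite ge0_expectation_ccdf //.
apply: (@le_trans _ _ (\int[lebesgue_measure]_(r in `[0%R, +oo[)
   ((c / l)%:E * (exponential_pdf l r)%:E))%E).
  apply: ge0_le_integral => //.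
  - by apply: (measurable_funS measurableT) => //; exact: ccdf_measurable.
  - exact: measurable_funTS.
  move=> r; rewrite /= in_itv /= andbT => r0.
  rewrite exponential_pdfE // -EFinM mulrA divfK ?gt_eqF //.
  suff -> : ccdf Y' r = P [set w | (r < Y w)%R] by exact: Ytail.
  by congr (P _); apply/seteqP; split => w /=; rewrite in_itv /= andbT.
apply: (@le_trans _ _ (\int[lebesgue_measure]_r
   ((c / l)%:E * (exponential_pdf l r)%:E))%E).
  by apply: ge0_subset_integral => // r _; exact: pdf_ge0.
rewrite ge0_integralZl //.
- by rewrite integral_exponential_pdf // mule1.
- by apply/measurable_EFinP; exact: measurable_exponential_pdf.
- by move=> r _; rewrite lee_fin exponential_pdf_ge0 // ltW.
Qed.

End exponential_tail.

Section subgaussian_tail.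
Context {d} {T : measurableType d} {R : realType} {P : probability T R}.
Context {X : T -> R} {theta : R}.
Hypotheses (mX : measurable_fun setT X) (theta_gt0 : 0 < theta).
Hypothesis X_tail : forall xi, 0 <= xi ->
  (P [set w | (xi <= `|X w|)%R] <=
    (2 * expR (- (xi ^+ 2 * theta ^+ 2) / 2))%:E)%E.

Local Notation gauss b := (expR (- (b ^+ 2 * theta ^+ 2) / 2)).

Let measurable_normX : measurable_fun setT (fun w => `|X w|).
Proof. exact: measurableT_comp (@normr_measurable R setT) mX. Qed.

Lemma measurable_excess b : measurable_fun setT (fun w => excess b (X w)).
Proof. by apply: measurable_maxr => //; apply: measurable_funB. Qed.

Lemma excess_tail b s : 0 <= b -> 0 <= s ->
  (P [set w | (s < excess b (X w))%R] <=
    (2 * expR (- ((b + s) ^+ 2 * theta ^+ 2) / 2))%:E)%E.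
Proof.
move=> b0 s0; apply: le_trans _ (X_tail _ (addr_ge0 b0 s0)).
apply: le_measure; rewrite ?inE.
- exact/measurable_ltr_set/measurable_excess.
- exact: measurable_ler_set.
- by move=> w /=; exact: lt_excess.
Qed.

Lemma integral_excess_le b : 0 < b ->
  (\int[P]_w (excess b (X w))%:E <= (2 * gauss b / (b * theta ^+ 2))%:E)%E.
Proof.
move=> b0; apply: ge0_integral_le_exp_tail.
- exact: measurable_excess.
- by move=> w; exact: excess_ge0.
- by rewrite mulr_ge0 // expR_ge0.
- by rewrite mulr_gt0 // exprn_gt0.
move=> r r0; apply: le_trans (excess_tail b r (ltW b0) r0) _.
rewrite lee_fin -mulrA ler_pM2l // -expRD ler_expR.
have : 0 <= r ^+ 2 * theta ^+ 2 by rewrite mulr_ge0 // sqr_ge0.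
nra.
Qed.

Lemma integral_excess_sqr_le b : 0 <= b ->
  (\int[P]_w (excess b (X w) ^+ 2)%:E <= (4 * gauss b / theta ^+ 2)%:E)%E.
Proof.
move=> b0.
have -> : 4 * gauss b / theta ^+ 2 = 2 * gauss b / (theta ^+ 2 / 2).
  by field; rewrite gt_eqF.
apply: ge0_integral_le_exp_tail.
- exact/measurable_funX/measurable_excess.
- by move=> w; exact: sqr_ge0.
- by rewrite mulr_ge0 // expR_ge0.
- by rewrite divr_gt0 // exprn_gt0.
move=> r r0; set s := Num.sqrt r.
have s0 : 0 <= s := sqrtr_ge0 r.
have sr : s ^+ 2 = r by rewrite sqr_sqrtr.
apply: le_trans (le_measure _ _ _ _) (le_trans (excess_tail b s b0 s0) _).
- by rewrite inE; exact/measurable_ltr_set/measurable_funX/measurable_excess.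
- by rewrite inE; exact/measurable_ltr_set/measurable_excess.
- by move=> w /=; rewrite -sr ltr_pXn2r // ?nnegrE // excess_ge0.
rewrite lee_fin -mulrA ler_pM2l // -expRD ler_expR.
have := mulr_ge0 (mulr_ge0 b0 s0) (sqr_ge0 theta).
rewrite -sr; nra.
Qed.

Lemma integral_sqr_le :
  (\int[P]_w (X w ^+ 2)%:E <= (4 / theta ^+ 2)%:E)%E.
Proof.
rewrite (eq_integral (fun w => (excess 0 (X w) ^+ 2)%:E)); last first.
  by move=> w _; rewrite excess0 real_normK // num_real.
apply: le_trans (integral_excess_sqr_le 0 (lexx 0)) _.
by rewrite expr0n /= mul0r oppr0 mul0r expR0 mulr1.
Qed.

Lemma integrable_excess b : 0 < b ->
  P.-integrable setT (EFin \o (fun w => excess b (X w))).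
Proof.
move=> b0; apply: ge0_integrable_le (integral_excess_le b b0).
- exact: measurable_excess.
- by move=> w; exact: excess_ge0.
Qed.

Lemma integrable_excess_sqr b : 0 <= b ->
  P.-integrable setT (EFin \o (fun w => excess b (X w) ^+ 2)).
Proof.
move=> b0; apply: ge0_integrable_le (integral_excess_sqr_le b b0).
- exact/measurable_funX/measurable_excess.
- by move=> w; exact: sqr_ge0.
Qed.

Lemma integrable_sqr : P.-integrable setT (EFin \o (fun w => X w ^+ 2)).
Proof.
apply: ge0_integrable_le integral_sqr_le.
- exact: measurable_funX.
- by move=> w; exact: sqr_ge0.
Qed.

Lemma integral_sqr_le_excess b : 0 < b ->
  P.-integrable setT (EFin \o X) -> (\int[P]_w (X w)%:E = 0)%E ->
  (\int[P]_w (X w ^+ 2)%:E <=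
    (2 * b ^+ 2)%:E * P [set w | (0 <= X w)%R] +
    \int[P]_w (excess b (X w) ^+ 2)%:E +
    (3 * b)%:E * \int[P]_w (excess b (X w))%:E)%E.
Proof.
move=> b0 iX EX0; set A := [set w | (0 <= X w)%R].
have mA : measurable A by exact: measurable_ler_set.
have iA : P.-integrable setT (EFin \o \1_A).
  apply: ge0_integrable_le (_ : _ <= 1%:E)%E.
  - exact: measurable_indic.
  - by move=> w; rewrite indicE.
  - by rewrite integral_indic // setIT probability_le1.
have ibX := integrableZl measurableT b iX.
have iA2 := integrableZl measurableT (2 * b ^+ 2) iA.
have iu2 := integrable_excess_sqr b (ltW b0).
have iu := integrable_excess b b0.
have i3u := integrableZl measurableT (3 * b) iu.
have iAu2 := integrableD measurableT iA2 iu2.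
have -> : (\int[P]_w (X w ^+ 2)%:E = \int[P]_w (X w ^+ 2 + b * X w)%:E)%E.
  under [RHS]eq_integral do rewrite EFinD EFinM.
  rewrite (integralD measurableT integrable_sqr ibX).
  by rewrite integralZl // EX0 mule0 adde0.
have -> : ((2 * b ^+ 2)%:E * P A + \int[P]_w (excess b (X w) ^+ 2)%:E +
      (3 * b)%:E * \int[P]_w (excess b (X w))%:E =
    \int[P]_w (2 * b ^+ 2 * \1_A w + excess b (X w) ^+ 2 +
      3 * b * excess b (X w))%:E)%E.
  under [RHS]eq_integral do rewrite !EFinD (EFinM (2 * b ^+ 2)) (EFinM (3 * b)).
  rewrite (integralD measurableT iAu2 i3u) (integralD measurableT iA2 iu2).
  have -> : P A = (\int[P]_w (\1_A w)%:E)%E by rewrite integral_indic // setIT.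
  by rewrite !integralZl.
apply: le_integral => //.
- apply: (eq_integrable measurableT _ _ _
    (integrableD measurableT integrable_sqr ibX)).
  by move=> w _; rewrite /= EFinD EFinM.
- apply: (eq_integrable measurableT _ _ _ (integrableD measurableT iAu2 i3u)).
  by move=> w _; rewrite /= !EFinD !EFinM.
move=> w _; rewrite lee_fin indicE.
have -> : (w \in A) = (0 <= X w)%R by apply/idP/idP => [/set_mem | /mem_set].
exact: sqr_add_mul_le_excess.
Qed.

Lemma integral_sqr_le_mass b : 0 < b ->
  P.-integrable setT (EFin \o X) -> (\int[P]_w (X w)%:E = 0)%E ->
  (\int[P]_w (X w ^+ 2)%:E <=
    (2 * b ^+ 2)%:E * P [set w | (0 <= X w)%R] +
    (10 * gauss b / theta ^+ 2)%:E)%E.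
Proof.
move=> b0 iX EX0; apply: le_trans (integral_sqr_le_excess b b0 iX EX0) _.
rewrite -addeA leeD2l //.
have b3 : (0 <= (3 * b)%:E)%E by rewrite lee_fin mulr_ge0 // ltW.
apply: le_trans (leeD (integral_excess_sqr_le b (ltW b0))
  (lee_wpmul2l b3 (integral_excess_le b b0))) _.
rewrite -EFinM -EFinD lee_fin [leLHS](_ : _ = 10 * gauss b / theta ^+ 2) //.
by field; rewrite !gt_eqF.
Qed.

End subgaussian_tail.

Theorem corollary3 (d : measure_display) (T : measurableType d) (R : realType)
  (P : probability T R) (Z : {RV P >-> R})
  (HZ : P.-integrable setT (EFin \o Z))
  (theta : R) (htheta : 0 < theta)
  (Htail : forall xi : R, 0 <= xi ->
     (P [set w | (xi <= `|Z w - fine ('E_P[Z])%E|)%R ] <=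
      (2 * expR (- (xi ^+ 2 * theta ^+ 2) / 2))%:E)%E) :
  forall kappa : R, 0 < kappa ->
    ((theta ^+ 2 / (2 * kappa ^+ 2))%:E * 'V_P[Z]
      - (2 * expR (- (kappa ^+ 2) / 2) *
         (1 + Num.sqrt 2 + Num.sqrt (2 * pi) / kappa + 1 / kappa ^+ 2))%:E
     <= P [set w | (fine ('E_P[Z])%E <= Z w)%R])%E.
Proof.
move=> kappa kappa_gt0; pose X w := Z w - fine 'E_P[Z].
have mX : measurable_fun setT X by apply: measurable_funB.
have iX2 := integrable_sqr mX htheta Htail.
have mA : measurable [set w | (0 <= X w)%R] by exact: measurable_ler_set.
have -> : [set w | (fine 'E_P[Z] <= Z w)%R] = [set w | (0 <= X w)%R].
  by apply/seteqP; split => w /=; rewrite subr_ge0.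
rewrite variance_centered -(fineK (integrable_fin_num measurableT iX2)).
rewrite -(fineK (fin_num_measure P _ mA)).
rewrite -EFinM -EFinB lee_fin.
have [kappa_small | kappa_large] := ltP kappa (1 / 2).
  apply: bound_small_kappa;
    rewrite ?sqrt2_ge1 ?sqrt2pi_ge2 ?fine_ge0 ?measure_ge0 //.
    by rewrite kappa_gt0 /=; lra.
  by rewrite -lee_fin fineK ?integral_sqr_le // integrable_fin_num.
apply: bound_large_kappa; rewrite ?sqrt2_ge1 ?sqrt2pi_ge2 //.
have := integral_sqr_le_mass mX htheta Htail _ (divr_gt0 kappa_gt0 htheta)
  (integrable_centered HZ) (integral_centered HZ).
have -> : - ((kappa / theta) ^+ 2 * theta ^+ 2) / 2 = - kappa ^+ 2 / 2.
  by field; rewrite gt_eqF.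
rewrite -lee_fin fineK ?integrable_fin_num // => /le_trans; apply.
by rewrite [leRHS]EFinD [in leRHS]EFinM fineK ?fin_num_measure.
Qed.
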